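(* Let $V$ be a nonempty set, $E\subset V\times V$, $W\subset V$, and let $B,C\subset V$ satisfy $B\cap C=\emptyset$, $B\cap W=\emptyset$, $C\cap W=\emptyset$. The following are equivalent: (1) for every $b\in B$ and $c\in C$, $\operatorname{cl}_W(R_Wb)\cap\operatorname{cl}_W(R_Wc)=\emptyset$ (i.e. $b$ and $c$ are t-separated w.r.t. $W$); (2) there exist $W_B,W_C\subset V$ with $W_B\cap W_C=\emptyset$, $W_B\cup W_C=W$, and $\operatorname{cl}_W(B\cup W_B)\cap\operatorname{cl}_W(C\cup W_C)=\emptyset$.
   Context: Relations on $V$: $x\,R\,y$ means $(x,y)\in R$; composition $RR'$: $x(RR')y$ iff there is $z$ with $xRz$ and $zR'y$; $R^{-1}$ is the converse; $R^0=\Delta$, $R^{n+1}=RR^n$, $R^+=\bigcup_{k\ge1}R^k$, $R^*=\bigcup_{k\ge0}R^k$. For $S\subset V$, $\Delta_S=\{(x,x):x\in S\}$, $\Delta=\Delta_V$; foreset $RS=\{x:\exists s\in S,\ xRs\}$, $Rc=R\{c\}$. For any relation $F$, $\mathcal T_F=\{O\subset V: OF\subset O\}$ is a topology on $V$. With $W^c=V\setminus W$: $E_W=\Delta_{W^c}E$; $B_W=E(E_W)^*$; $B_W^-=(B_W)^{-1}=(E_W^{-1})^*E^{-1}$; $K_W=B_W^-\Delta_{W^c}B_W$; $C_W=(\Delta_WK_W\Delta_W)^+\cup\Delta_W$; $R_W=\Delta\cup C_W(B_W^-\cup K_W^{-1})$. For $S\subset V$, $\operatorname{cl}_W(S)$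 is the topological closure of $S$ in the topology $\mathcal T_{E_W}$. *)

Set Implicit Arguments.

Definition rel (V : Type) := V -> V -> Prop.
Definition vset (V : Type) := V -> Prop.

Section Rels.
Variable V : Type.

Definition rcomp (R R' : rel V) : rel V := fun x y => exists z, R x z /\ R' z y.
Definition rconv (R : rel V) : rel V := fun x y => R y x.
Definition rDelta : rel V := fun x y => x = y.
Definition rDeltaS (S : vset V) : rel V := fun x y => x = y /\ S x.
Definition runion (R R' : rel V) : rel V := fun x y => R x y \/ R' x y.
Definition scompl (S : vset V) : vset V := fun x => ~ S x.
Definition sunion (S S' : vset V) : vset V := fun x => S x \/ S' x.

Fixpoint rpow (R : rel V) (n : nat) : rel V :=
  match n with
  | O => rDelta
  | S k => rcomp R (rpow R k)
  end.
Definition rplus (R : rel V) : rel V := fun x y => exists k, rpow R (S k) x y.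
Definition rstar (R : rel V) : rel V := fun x y => exists k, rpow R k x y.

Definition foreset (R : rel V) (S : vset V) : vset V :=
  fun x => exists s, S s /\ R x s.
Definition foreset1 (R : rel V) (c : V) : vset V := foreset R (fun s => s = c).

Definition F_open (F : rel V) (O : vset V) : Prop :=
  forall o y, O o -> F o y -> O y.
Definition F_closure (F : rel V) (S : vset V) : vset V :=
  fun x => forall O, F_open F O -> O x -> exists y, O y /\ S y.

Variable E : rel V.
Variable W : vset V.

Definition E_W : rel V := rcomp (rDeltaS (scompl W)) E.
Definition B_W : rel V := rcomp E (rstar E_W).
Definition B_W_minus : rel V := rconv B_W.
Definition K_W : rel V := rcomp B_W_minus (rcomp (rDeltaS (scompl W)) B_W).
Definition C_W : rel V :=
  runion (rplus (rcomp (rDeltaS W) (rcomp K_W (rDeltaS W)))) (rDeltaS W).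
Definition R_W : rel V :=
  runion rDelta (rcomp C_W (runion B_W_minus (rconv K_W))).
Definition cl_W (S : vset V) : vset V := F_closure E_W S.

End Rels.

From Stdlib Require Import Classical.
Set Implicit Arguments.
Unset Strict Implicit.

(* [cl_W S] is the set of points from which some point of [S] is reachable by
   [E_W]-paths, and two points are [K_W]-related exactly when they have a
   common strict [E_W]-ancestor outside [W]. Hence a separation of closures
   forces every [C_W]-chain and every [B_W]/[K_W]-step to stay on one side, so
   [R_W b] lies in [B ∪ W_B] when [b ∈ B]; this gives (2) => (1). Conversely,
   take [W_B] to be the points of [W] lying in some [R_W b], [b ∈ B]: a point
   of [W] sharing an [E_W]-ancestor with [R_W b] is itself in [R_W b], so the
   two closures in (2) cannot meet without violating (1). *)

Section Star.
Variables (V : Type) (R : rel V).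

Lemma rpow_snoc k x y z : rpow R k x y -> R y z -> rpow R (S k) x z.
Proof.
  revert x; induction k as [|k IH]; simpl; intros x Hxy Hyz.
  - unfold rDelta in Hxy; subst. exists z; split; [exact Hyz | reflexivity].
  - destruct Hxy as [m [Hxm Hmy]]. exists m; split; [exact Hxm | exact (IH m Hmy Hyz)].
Qed.

Lemma rstar_refl x : rstar R x x.
Proof. exists 0; reflexivity. Qed.

Lemma rstar_cons x y z : R x y -> rstar R y z -> rstar R x z.
Proof. intros Hxy [k Hk]. exists (S k), y; auto. Qed.

Lemma rstar_snoc x y z : rstar R x y -> R y z -> rstar R x z.
Proof. intros [k Hk] Hyz. exists (S k). eapply rpow_snoc; eauto. Qed.

Lemma rstar_inv x y : rstar R x y -> x = y \/ exists m, R x m /\ rstar R m y.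
Proof.
  intros [[|k] Hk]; simpl in Hk.
  - left; exact Hk.
  - right. destruct Hk as [m [Hxm Hmy]]. exists m; split; [exact Hxm | exists k; exact Hmy].
Qed.

Lemma rpow_closed_fwd (P : vset V) k x y :
  (forall a b, P a -> R a b -> P b) -> rpow R k x y -> P x -> P y.
Proof.
  intros HP. revert x; induction k as [|k IH]; simpl; intros x Hxy Px.
  - unfold rDelta in Hxy; subst; exact Px.
  - destruct Hxy as [m [Hxm Hmy]]. exact (IH m Hmy (HP x m Px Hxm)).
Qed.

Lemma rpow_closed_bwd (P : vset V) k x y :
  (forall a b, R a b -> P b -> P a) -> rpow R k x y -> P y -> P x.
Proof.
  intros HP. revert x; induction k as [|k IH]; simpl; intros x Hxy Py.
  - unfold rDelta in Hxy; subst; exact Py.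
  - destruct Hxy as [m [Hxm Hmy]]. eapply HP; eauto.
Qed.

End Star.

Section Closure.
Variables (V : Type) (E : rel V) (W : vset V).

Definition cl_W_disjoint (S T : vset V) : Prop :=
  forall x, ~ (cl_W E W S x /\ cl_W E W T x).

Lemma cl_WP S x : cl_W E W S x <-> exists y, S y /\ rstar (E_W E W) x y.
Proof.
  split.
  - intros Hx. destruct (Hx (rstar (E_W E W) x)) as [y [Hxy Sy]].
    + intros o y Ho Hoy. eapply rstar_snoc; eauto.
    + apply rstar_refl.
    + exists y; auto.
  - intros [y [Sy [k Hk]]] O HO Ox. exists y; split; [|exact Sy].
    exact (rpow_closed_fwd HO Hk Ox).
Qed.

Lemma cl_W_mono (S T : vset V) x :
  (forall y, S y -> T y) -> cl_W E W S x -> cl_W E W T x.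
Proof.
  intros HST Hx O HO Ox. destruct (Hx O HO Ox) as [y [Oy Sy]]. exists y; auto.
Qed.

Lemma rstar_E_W_of_B_W x y : ~ W x -> B_W E W x y -> rstar (E_W E W) x y.
Proof.
  intros Wx [m [Hxm Hmy]]. apply rstar_cons with m; [|exact Hmy].
  exists x; split; [split; [reflexivity | exact Wx] | exact Hxm].
Qed.

Lemma rstar_E_W_inv x y :
  rstar (E_W E W) x y -> x = y \/ (~ W x /\ B_W E W x y).
Proof.
  intros Hxy. destruct (rstar_inv Hxy) as [-> | [m [[x' [[<- Wx] Hxm]] Hmy]]].
  - left; reflexivity.
  - right; split; [exact Wx | exists m; split; assumption].
Qed.

Lemma cl_W_of_B_W (S : vset V) x y : ~ W x -> B_W E W x y -> S y -> cl_W E W S x.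
Proof.
  intros Wx Hxy Sy. apply cl_WP. exists y; split; [exact Sy | exact (rstar_E_W_of_B_W Wx Hxy)].
Qed.

Lemma cl_W_self (S : vset V) x : S x -> cl_W E W S x.
Proof. intros Sx. apply cl_WP. exists x; split; [exact Sx | apply rstar_refl]. Qed.

Lemma K_W_of_B_W u a c : ~ W u -> B_W E W u a -> B_W E W u c -> K_W E W a c.
Proof. intros Wu Hua Huc. exists u; split; [exact Hua|]. exists u; repeat split; assumption. Qed.

Lemma K_W_sym a c : K_W E W a c -> K_W E W c a.
Proof. intros [u [Hua [u' [[<- Wu] Huc]]]]. exact (K_W_of_B_W Wu Huc Hua). Qed.

Lemma cl_W_disjoint_K_W (S T : vset V) a c :
  cl_W_disjoint S T -> K_W E W a c -> S a -> ~ T c.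
Proof.
  intros HST [u [Hua [u' [[<- Wu] Huc]]]] Sa Tc.
  apply (HST u); split; [exact (cl_W_of_B_W Wu Hua Sa) | exact (cl_W_of_B_W Wu Huc Tc)].
Qed.

Lemma cl_W_disjoint_B_W (S T : vset V) b z :
  cl_W_disjoint S T -> ~ W b -> B_W E W b z -> S b -> ~ T z.
Proof.
  intros HST Wb Hbz Sb Tz.
  apply (HST b); split; [exact (cl_W_self Sb) | exact (cl_W_of_B_W Wb Hbz Tz)].
Qed.

Lemma C_W_in_W x z : C_W E W x z -> W x /\ W z.
Proof.
  intros [[k Hk] | [<- Wx]]; [|split; exact Wx].
  destruct Hk as [m [[x' [[<- Wx] [m' [_ [<- Wm]]]]] Hmz]].
  split; [exact Wx|].
  refine (rpow_closed_fwd _ Hmz Wm).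
  intros a c _ [a' [_ [c' [_ [<- Wc]]]]]; exact Wc.
Qed.

Lemma C_W_refl x : W x -> C_W E W x x.
Proof. intros Wx. right; split; [reflexivity | exact Wx]. Qed.

Lemma C_W_cons_K y x z :
  W y -> W x -> K_W E W y x -> C_W E W x z -> C_W E W y z.
Proof.
  intros Wy Wx Hyx Hxz.
  assert (Step : rcomp (rDeltaS W) (rcomp (K_W E W) (rDeltaS W)) y x).
  { exists y; split; [split; [reflexivity | exact Wy]|].
    exists x; split; [exact Hyx | split; [reflexivity | exact Wx]]. }
  left. destruct Hxz as [[k Hk] | [<- _]].
  - exists (S k), x; split; [exact Step | exact Hk].
  - exists 0, x; split; [exact Step | reflexivity].
Qed.

Lemma C_W_closed_bwd (P : vset V) x z :
  (forall a c, W a -> K_W E W a c -> P c -> P a) -> C_W E W x z -> P z -> P x.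
Proof.
  intros HP [[k Hk] | [<- _]] Pz; [|exact Pz].
  refine (rpow_closed_bwd _ Hk Pz).
  intros a c [a' [[<- Wa] [c' [Hac [<- _]]]]]; eauto.
Qed.

Lemma R_W_refl b : R_W E W b b.
Proof. left; reflexivity. Qed.

Lemma R_W_inv y b :
  R_W E W y b -> y = b \/ exists z, C_W E W y z /\ (B_W E W b z \/ K_W E W b z).
Proof.
  intros [-> | [z [Hyz Hzb]]]; [left; reflexivity | right; exists z; auto].
Qed.

Lemma R_W_in_W y b : R_W E W y b -> y = b \/ W y.
Proof.
  intros Hyb. destruct (R_W_inv Hyb) as [-> | [z [Hyz _]]]; [left; reflexivity|].
  right; exact (proj1 (C_W_in_W Hyz)).
Qed.

Lemma R_W_of_B_W y b : W y -> B_W E W b y -> R_W E W y b.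
Proof. intros Wy Hby. right. exists y; split; [apply C_W_refl; exact Wy | left; exact Hby]. Qed.

Lemma R_W_cons_K y x b : W y -> K_W E W y x -> R_W E W x b -> R_W E W y b.
Proof.
  intros Wy Hyx Hxb. destruct (R_W_inv Hxb) as [-> | [z [Hxz Hzb]]]; right.
  - exists y; split; [apply C_W_refl; exact Wy | right; exact (K_W_sym Hyx)].
  - exists z; split; [|exact Hzb].
    apply C_W_cons_K with x; [exact Wy | exact (proj1 (C_W_in_W Hxz)) | exact Hyx | exact Hxz].
Qed.

Lemma R_W_common_ancestor x y1 y2 b :
  R_W E W y1 b -> W y2 ->
  rstar (E_W E W) x y1 -> rstar (E_W E W) x y2 -> R_W E W y2 b.
Proof.
  intros Hy1b Wy2 Hxy1 Hxy2.
  destruct (rstar_E_W_inv Hxy2) as [<- | [Wx Hxy2']].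
  - destruct (rstar_E_W_inv Hxy1) as [<- | [Wx _]]; [exact Hy1b | contradiction].
  - destruct (rstar_E_W_inv Hxy1) as [<- | [_ Hxy1']].
    + destruct (R_W_in_W Hy1b) as [-> | Wx']; [|contradiction].
      apply R_W_of_B_W; assumption.
    + apply R_W_cons_K with y1; [exact Wy2 | exact (K_W_of_B_W Wx Hxy2' Hxy1') | exact Hy1b].
Qed.

Lemma R_W_sub_of_cl_W_disjoint (P Q : vset V) b :
  cl_W_disjoint P Q -> (forall x, W x -> P x \/ Q x) -> P b -> ~ W b ->
  forall y, R_W E W y b -> P y.
Proof.
  intros HPQ Hcov Pb Wb y Hyb.
  destruct (R_W_inv Hyb) as [-> | [z [Hyz Hzb]]]; [exact Pb|].
  assert (Pz : P z).
  { destruct (Hcov z (proj2 (C_W_in_W Hyz))) as [Pz | Qz]; [exact Pz | exfalso].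
    destruct Hzb as [Hbz | Hbz].
    - exact (cl_W_disjoint_B_W HPQ Wb Hbz Pb Qz).
    - exact (cl_W_disjoint_K_W HPQ Hbz Pb Qz). }
  refine (C_W_closed_bwd _ Hyz Pz).
  intros a c Wa Hac Pc. destruct (Hcov a Wa) as [Pa | Qa]; [exact Pa | exfalso].
  exact (cl_W_disjoint_K_W HPQ (K_W_sym Hac) Pc Qa).
Qed.

Definition W_part (B : vset V) : vset V := fun y => W y /\ foreset (R_W E W) B y.

Lemma cl_W_disjoint_W_part (B C : vset V) :
  (forall b c, B b -> C c ->
     cl_W_disjoint (foreset1 (R_W E W) b) (foreset1 (R_W E W) c)) ->
  cl_W_disjoint (sunion B (W_part B)) (sunion C (fun y => W y /\ ~ W_part B y)).
Proof.
  intros Hsep x [H1 H2]. apply cl_WP in H1; apply cl_WP in H2.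
  destruct H1 as [y1 [Hy1 Hxy1]], H2 as [y2 [Hy2 Hxy2]].
  assert (Hb : exists b, B b /\ R_W E W y1 b).
  { destruct Hy1 as [By1 | [_ [b [Bb Hy1b]]]].
    - exists y1; split; [exact By1 | apply R_W_refl].
    - exists b; auto. }
  destruct Hb as [b [Bb Hy1b]].
  destruct Hy2 as [Cy2 | [Wy2 Hy2]].
  - apply (Hsep b y2 Bb Cy2 x); split; apply cl_WP.
    + exists y1; split; [exists b; auto | exact Hxy1].
    + exists y2; split; [exists y2; split; [reflexivity | apply R_W_refl] | exact Hxy2].
  - apply Hy2; split; [exact Wy2|].
    exists b; split; [exact Bb | exact (R_W_common_ancestor Hy1b Wy2 Hxy1 Hxy2)].
Qed.

End Closure.

Theorem proposition2 (V : Type) (E : rel V) (W B C : vset V) :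
  inhabited V ->
  (forall x, ~ (B x /\ C x)) ->
  (forall x, ~ (B x /\ W x)) ->
  (forall x, ~ (C x /\ W x)) ->
  ((forall b c, B b -> C c -> forall x,
      ~ (cl_W E W (foreset1 (R_W E W) b) x /\ cl_W E W (foreset1 (R_W E W) c) x))
   <->
   (exists WB WC : vset V,
      (forall x, ~ (WB x /\ WC x)) /\
      (forall x, (WB x \/ WC x) <-> W x) /\
      (forall x, ~ (cl_W E W (sunion B WB) x /\ cl_W E W (sunion C WC) x)))).
Proof.
  intros _ _ HBW HCW. split.
  - intros Hsep. exists (W_part E W B), (fun y => W y /\ ~ W_part E W B y).
    split; [|split].
    + intros x [HB [_ HC]]; exact (HC HB).
    + intros x; split; [intros [[Wx _] | [Wx _]]; exact Wx|].
      intros Wx. destruct (classic (W_part E W B x)); [left | right]; auto.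
    + exact (cl_W_disjoint_W_part Hsep).
  - intros [WB [WC [_ [Hcov Hdisj]]]] b c Bb Cc x [Hb Hc].
    assert (HcovB : forall y, W y -> sunion B WB y \/ sunion C WC y).
    { intros y Wy. destruct (proj2 (Hcov y) Wy); [left | right]; right; assumption. }
    assert (HcovC : forall y, W y -> sunion C WC y \/ sunion B WB y).
    { intros y Wy. destruct (HcovB y Wy); auto. }
    assert (HdisjC : cl_W_disjoint E W (sunion C WC) (sunion B WB)).
    { intros y [H1 H2]; exact (Hdisj y (conj H2 H1)). }
    apply (Hdisj x); split; eapply cl_W_mono; [| exact Hb | | exact Hc];
      intros y [s [<- Hys]].
    + refine (R_W_sub_of_cl_W_disjoint Hdisj HcovB (or_introl Bb) _ Hys).
      intros Wb; exact (HBW s (conj Bb Wb)).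
    + refine (R_W_sub_of_cl_W_disjoint HdisjC HcovC (or_introl Cc) _ Hys).
      intros Wc; exact (HCW s (conj Cc Wc)).
Qed.
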